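(* Let $n\ge 2$ and let $\Delta^o(SD_{8n})$ be the order super commuting graph of the semidihedral group $SD_{8n}$. Then the Sombor spectrum of $\Delta^o(SD_{8n})$ consists of $-(8n-1)\sqrt2$ with multiplicity $8n-1$ and $(8n-1)^2\sqrt2$ with multiplicity $1$.
   Context: For a finite simple graph $\Gamma$ with vertices $u_1,\dots,u_N$, the Sombor matrix $S(\Gamma)$ has $(i,j)$ entry $\sqrt{\deg(u_i)^2+\deg(u_j)^2}$ if $u_i,u_j$ are adjacent and $0$ otherwise; the Sombor spectrum is the multiset of its eigenvalues. $SD_{8n}=\langle a,b: a^{4n}=b^2=e,\ ba=a^{2n-1}b\rangle$. The order super commuting graph $\Delta^o(G)$ has vertex set $G$, and distinct $g,h$ are adjacent iff $o(g)=o(h)$ or there exist distinct $g',h'\in G$ with $o(g')=o(g)$, $o(h')=o(h)$ and $g'h'=h'g'$; here $o(x)$ is the order of $x$. *)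

From HB Require Import structures.
From mathcomp Require Import all_boot all_order all_algebra all_fingroup.
Set Implicit Arguments. Unset Strict Implicit. Unset Printing Implicit Defensive.
Import GRing.Theory Num.Theory.

Definition osc_adj (gT : finGroupType) (G : {group gT}) (g h : gT) : bool :=
  ((g != h) &&
  ((#[g] == #[h]) ||
   [exists g' in G, exists h' in G,
      [&& g' != h', #[g'] == #[g], #[h'] == #[h] & (g' * h' == h' * g')]]))%g.

Definition osc_deg (gT : finGroupType) (G : {group gT}) (g : gT) : nat :=
  #|[set h in G | osc_adj G g h]|.

Definition sombor_mx (R : rcfType) (gT : finGroupType) (G : {group gT})
  : 'M[R]_#|G| :=
  \matrix_(i, j)
    (let u := enum_val i in let v := enum_val j in
     if osc_adj G u v
     then Num.sqrt ((osc_deg G u)%:R ^+ 2 + (osc_deg G v)%:R ^+ 2)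
     else 0)%R.

From HB Require Import structures.
From mathcomp Require Import all_boot all_order all_algebra all_fingroup.
From mathcomp Require Import all_solvable ring zify.
Set Implicit Arguments. Unset Strict Implicit. Unset Printing Implicit Defensive.
Import GRing.Theory Num.Theory.

(* In SD_{8n} the generator a has order 4n and every element order d divides
   4n, so d is the order of the power a^(4n/d).  Two elements of different
   orders are therefore witnessed adjacent by two distinct commuting powers of
   a, and the order super commuting graph is complete.  Its Sombor matrix is
   then c (J - I) with c = (8n-1) sqrt 2, whose characteristic polynomial is
   (X + c)^(8n-1) (X - (8n-1) c). *)

Local Open Scope group_scope.

Section Semidihedral.

Variables (gT : finGroupType) (a b : gT) (n : nat).
Hypotheses (n_gt0 : (0 < n)%N) (a4n : a ^+ (4 * n) = 1) (b2 : b ^+ 2 = 1)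
  (ba : b * a = a ^+ (2 * n - 1) * b).

Lemma semidihedral_invg : b^-1 = b.
Proof. by apply/eqP; rewrite eq_invg_mul -expg2 b2. Qed.

Lemma semidihedral_conjg : a ^ b = a ^+ (2 * n - 1).
Proof. by rewrite conjgE semidihedral_invg mulgA ba -mulgA -expg2 b2 mulg1. Qed.

Lemma semidihedral_sqr i : (a ^+ i * b) ^+ 2 = a ^+ (2 * n * i).
Proof.
rewrite expg2 -mulgA -{1}semidihedral_invg -conjgE.
rewrite conjXg semidihedral_conjg -expgM -expgD; congr (a ^+ _); nia.
Qed.

Lemma semidihedral_mulg : <<[set a; b]>> = <[a]> * <[b]>.
Proof.
rewrite -norm_joinEr; last by rewrite norms_cycle semidihedral_conjg mem_cycle.
by rewrite joing_idl joing_idr joingE.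
Qed.

Lemma semidihedral_card_le : (#|<<[set a; b]>>| <= 2 * #[a])%N.
Proof.
have ob : (#[b] <= 2)%N by rewrite dvdn_leq // order_dvdn b2.
rewrite semidihedral_mulg mulnC; apply: leq_trans (leq_mul (leqnn _) ob).
by rewrite mul_cardG leq_pmulr // cardG_gt0.
Qed.

Lemma semidihedral_exponent : (exponent <<[set a; b]>> %| 4 * n)%N.
Proof.
apply/exponentP => x; rewrite semidihedral_mulg.
case/mulsgP=> _ _ /cycleP[i ->] /cycleP[j ->] ->.
rewrite -(expg_mod _ b2) modn2; case: (odd j).
- have -> : (4 * n = 2 * (2 * n))%N by rewrite mulnA.
  rewrite expg1 expgM semidihedral_sqr -expgM.
  have -> : (2 * n * i * (2 * n) = 4 * n * (n * i))%N by nia.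
  by rewrite expgM a4n expg1n.
- by rewrite mulg1 -expgM mulnC expgM a4n expg1n.
Qed.

Lemma semidihedral_order : #|<<[set a; b]>>| = (8 * n)%N -> #[a] = (4 * n)%N.
Proof.
move=> card8n; apply/eqP; rewrite eqn_leq dvdn_leq ?muln_gt0 ?order_dvdn ?a4n //=.
by have := semidihedral_card_le; rewrite card8n; lia.
Qed.

End Semidihedral.

Lemma order_expg_divn (gT : finGroupType) (x : gT) d :
  (d %| #[x])%N -> #[x ^+ (#[x] %/ d)] = d.
Proof.
move=> dvd_d; have d_gt0 : (0 < d)%N by apply: dvdn_gt0 dvd_d.
rewrite orderXdiv ?dvdn_div // -{1}(divnK dvd_d) mulKn //.
by rewrite divn_gt0 // dvdn_leq.
Qed.

Section CompleteOrderSuperCommutingGraph.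

Variables (gT : finGroupType) (G : {group gT}) (a : gT).
Hypotheses (aG : a \in G) (expG : (exponent G %| #[a])%N).

Lemma osc_adj_complete : {in G &, forall g h, g != h -> osc_adj G g h}.
Proof.
move=> g h gG hG neq_gh; rewrite /osc_adj neq_gh /=.
case: eqP => //= neq_o; apply/existsP; exists (a ^+ (#[a] %/ #[g])).
rewrite groupX //=; apply/existsP; exists (a ^+ (#[a] %/ #[h])).
have ord x : x \in G -> #[a ^+ (#[a] %/ #[x])] = #[x].
  by move=> xG; rewrite order_expg_divn // (dvdn_trans (dvdn_exponent xG)).
rewrite groupX //= !ord // !eqxx -!expgD addnC eqxx !andbT.
by apply/eqP=> eq_pows; apply: neq_o; rewrite -(ord g) // -(ord h) // eq_pows.
Qed.

Lemma osc_deg_complete : {in G, forall g, osc_deg G g = #|G|.-1}.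
Proof.
move=> g gG; rewrite /osc_deg (cardsD1 g G) gG add1n /=.
apply: eq_card => h; rewrite !inE andbC; case: (eqVneq h g) => [->|neq_hg].
  by rewrite /osc_adj eqxx.
by case hG: (h \in G); rewrite ?andbF // osc_adj_complete // eq_sym.
Qed.

Lemma sombor_mx_complete (R : rcfType) :
  sombor_mx R G = (\matrix_(i, j) (if i == j then 0 else (#|G|.-1)%:R * Num.sqrt 2))%R.
Proof.
apply/matrixP => i j; rewrite !mxE /=.
case: (eqVneq i j) => [->|neq_ij]; first by rewrite /osc_adj eqxx.
rewrite osc_adj_complete ?enum_valP ?(inj_eq enum_val_inj) //.
rewrite !osc_deg_complete ?enum_valP // -mulr2n -[(_ *+ 2)%R]mulr_natr.
by rewrite sqrtrM ?sqr_ge0 // sqrtr_sqr ger0_norm.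
Qed.

End CompleteOrderSuperCommutingGraph.

Local Close Scope group_scope.

Local Open Scope ring_scope.

Lemma mul_const_mx (R : pzSemiRingType) m n p (x y : R) :
  (const_mx x : 'M_(m, n)) *m (const_mx y : 'M_(n, p)) = const_mx (x * y *+ n).
Proof.
apply/matrixP => i j; rewrite !mxE (eq_bigr (fun=> x * y)) => [|k _].
  by rewrite sumr_const card_ord.
by rewrite !mxE.
Qed.

Lemma det_scalar_add_const (R : comNzRingType) m (al be : R) :
  \det (al%:M + const_mx be : 'M_(1 + m)) = (al + (1 + m)%:R * be) * al ^+ m.
Proof.
(* Subtracting the first row from the others and then adding the other
   columns to the first makes the matrix block upper triangular. *)
pose L : 'M[R]_(1 + m) := block_mx 1 0 (const_mx (-1)) 1.
pose U : 'M[R]_(1 + m) := block_mx 1 0 (const_mx 1) 1.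
have detL : \det L = 1 by rewrite det_lblock !det1 mulr1.
have detU : \det U = 1 by rewrite det_lblock !det1 mulr1.
have -> : \det (al%:M + const_mx be : 'M_(1 + m)) =
          \det (L *m (al%:M + const_mx be) *m U).
  by rewrite !det_mulmx detL detU mul1r mulr1.
rewrite [al%:M]scalar_mx_block -[const_mx be]block_mx_const add_block_mx.
rewrite !mulmx_block !(mul1mx, mul0mx, mulmx1, mulmx0, addr0, add0r, mulmxDl, mulmxDr).
rewrite !(mul_const_mx, mul_mx_scalar, mul_scalar_mx, scalemx_const).
set A21 := (X in block_mx _ _ X _); set A22 := (X in block_mx _ _ _ X).
have -> : A21 = 0 by apply/matrixP => i j; rewrite !mxE; ring.
have -> : A22 = al%:M.
  by apply/matrixP => i j; rewrite !mxE mulr1n mulN1r addrCA addNr addr0.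
by rewrite det_ublock det_mx11 det_scalar !mxE eqxx mulr1n; ring.
Qed.

Lemma char_poly_const_offdiag (R : comNzRingType) N (c : R) : (0 < N)%N ->
  char_poly (\matrix_(i, j) (if i == j then 0 else c) : 'M_N) =
  ('X + c%:P) ^+ N.-1 * ('X - (N.-1%:R * c)%:P).
Proof.
case: N => // m _; rewrite /char_poly.
have -> : char_poly_mx (\matrix_(i, j) (if i == j then 0 else c)) =
          ('X + c%:P)%:M + const_mx (- c%:P) :> 'M_(1 + m).
  by apply/matrixP => i j; rewrite !mxE; case: (i == j); rewrite /= ?mulr1n ?mulr0n; ring.
rewrite det_scalar_add_const mulrC polyCM polyC_natr; congr (_ * _).
by rewrite natrD; ring.
Qed.

Theorem corollary4p6 (R : rcfType) (n : nat) (gT : finGroupType)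
    (G : {group gT}) (a b : gT) :
  (2 <= n)%N ->
  (a ^+ (4 * n) = 1)%g -> (b ^+ 2 = 1)%g -> (b * a = a ^+ (2 * n - 1) * b)%g ->
  G :=: <<[set a; b]>>%g -> #|G| = (8 * n)%N ->
  char_poly (sombor_mx R G) =
    (('X + (((8 * n - 1)%:R * Num.sqrt 2%:R)%:P)) ^+ (8 * n - 1) *
     ('X - ((((8 * n - 1) ^ 2)%:R * Num.sqrt 2%:R)%:P)))%R.
Proof.
move=> n_ge2 a4n b2 ba defG cardG.
have n_gt0 : (0 < n)%N by apply: leq_trans n_ge2.
have aG : a \in G by rewrite defG mem_gen // !inE eqxx.
have oa : #[a]%g = (4 * n)%N.
  by apply: (semidihedral_order n_gt0 a4n b2 ba); rewrite -defG.
have expG : (exponent G %| #[a]%g)%N by rewrite oa defG semidihedral_exponent.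
rewrite (sombor_mx_complete aG expG) char_poly_const_offdiag cardG ?muln_gt0 // subn1.
by rewrite mulrA -natrM mulnn.
Qed.
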